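(* Let $(X,p)$ and $(Y,d)$ be metric spaces with $(Y,d)$ separable, and let $F: X \Rightarrow Y$ be a multi-valued function whose graph is a $\Sigma^0_2$ subset of $X \times Y$. Let $P$ be the set of points of $X$ at which $F$ is strongly continuous. (a) If $Y$ is compact and $F(x)$ is closed for every $x \in X$, then $P$ is a $\Pi^0_2$ subset of $X$. (b) If $Y$ is exhaustible by compact sets and $F(x)$ is closed for every $x \in X$, then $P$ is a $\Sigma^0_3$ subset of $X$.
   Context: A multi-valued function $F: X \Rightarrow Y$ assigns to each $x$ a nonempty set $F(x)\subseteq Y$; its graph is $\{(x,y): y\in F(x)\}\subseteq X\times Y$. $F$ is strongly continuous at $x$ if for every $y \in F(x)$ and every $\varepsilon>0$ there is $\delta>0$ such that for every $x' \in B_p(x,\delta)$ there is $y' \in F(x')$ with $d(y,y')<\varepsilon$. $Y$ is exhaustible by compact sets if there are compact $K_n\subseteq Y$ with $K_n$ contained in the interior of $K_{n+1}$ and $Y=\bigcup_n K_n$. Borel hierarchy: $\Sigma^0_1$ = open; $\Sigma^0_{n+1}$ = countable unions of sets whose complements are $\Sigma^0_k$ for some $k\le n$; $\Pi^0_n$ = complements of $\Sigma^0_n$ ($\Sigma^0_2=F_\sigma$, $\Pi^0_2=G_\delta$, $\Sigma^0_3$ = countable unions of $G_\delta$ sets). *)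

From HB Require Import structures.
From mathcomp Require Import all_boot all_order all_algebra.
From mathcomp Require Import all_classical all_reals all_analysis.
From mathcomp Require Import borel_hierarchy.
Set Implicit Arguments. Unset Strict Implicit. Unset Printing Implicit Defensive.
Import Order.TTheory GRing.Theory Num.Theory.
Local Open Scope classical_set_scope.
Local Open Scope ring_scope.

Definition graph_mv {X Y : Type} (F : X -> set Y) : set (X * Y) :=
  [set z | F z.1 z.2].

Definition strongly_continuous_at {R : realType} {X Y : metricType R}
  (F : X -> set Y) (x : X) : Prop :=
  forall y, F x y -> forall eps : R, 0 < eps ->
    exists2 delta : R, 0 < delta &
      forall x', mdist x x' < delta -> exists2 y', F x' y' & mdist y y' < eps.

Definition separable_space (T : topologicalType) : Prop :=
  exists2 D : set T, countable D & dense D.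

Definition exhaustible_by_compacts (T : topologicalType) : Prop :=
  exists K : (set T)^nat,
    [/\ forall n, compact (K n),
        forall n, K n `<=` interior (K n.+1) &
        \bigcup_n K n = [set: T]].

(* Sigma^0_3 = countable unions of G_delta sets (Pi^0_2); Pi^0_2 = Gdelta,
   Sigma^0_2 = Fsigma come from borel_hierarchy. *)
Definition Sigma03 (T : topologicalType) (S : set T) : Prop :=
  exists2 G : (set T)^nat, (forall n, Gdelta (G n)) & S = \bigcup_n G n.

From HB Require Import structures.
From mathcomp Require Import all_boot all_order all_algebra.
From mathcomp Require Import all_classical all_reals all_analysis.
From mathcomp Require Import borel_hierarchy.
Import Order.TTheory GRing.Theory Num.Theory.
Local Open Scope classical_set_scope.
Local Open Scope ring_scope.

(* F is strongly continuous at x iff, for every ball B = B(c, 1/(n+1)) with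
   c in a countable dense set, either F x misses B or the lower inverse
   F^-(B) = {x | F x meets B} is a neighbourhood of x.  Each such condition
   defines the G_delta set ~F^-(B) \/ int F^-(B) as soon as F^-(B) is F_sigma,
   and F^-(B) is the projection of the F_sigma graph cut down to B; writing B
   as a countable union of compact sets (here Y is sigma-compact) makes this
   projection F_sigma, since projecting a closed set along a compact factor
   keeps it closed. *)

Lemma countable_range_nat {I : Type} (D : set I) :
  countable D -> D !=set0 -> exists g : nat -> I, range g = D.
Proof.
elim/Ppointed: I => I in D *; first by rewrite emptyE => _ [].
move=> /pcard_surjP[g gD] [i0 Di0].
pose h n := if pselect (D (g n)) is left _ then g n else i0.
exists h; apply/seteqP; split=> [_ [n _ <-]|i Di].
  by rewrite /h; case: pselect.
have [n _ gni] := gD i Di; exists n => //.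
by rewrite /h; case: pselect => //; rewrite gni.
Qed.

Section countable_unions.
Variable T : topologicalType.

Lemma Fsigma_bigcup (I : Type) (D : set I) (A : I -> set T) :
  countable D -> (forall i, D i -> Fsigma (A i)) ->
  Fsigma (\bigcup_(i in D) A i).
Proof.
move=> cD FA.
have /choice[C hC] : forall i, exists C : (set T)^nat,
    (forall n, closed (C n)) /\ (D i -> A i = \bigcup_n C n).
  move=> i; have [/FA[C clC ->]|nDi] := pselect (D i); first by exists C.
  by exists (fun=> set0); split=> [_|/nDi]; first exact: closed0.
have -> : \bigcup_(i in D) A i = \bigcup_(p in D `*` [set: nat]) C p.1 p.2.
  by rewrite bigcup_setX; apply: eq_bigcupr => i Di; rewrite (hC i).2.
have [->|/set0P DN0] := eqVneq (D `*` [set: nat]) set0.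
  by rewrite bigcup_set0; exact/closed_Fsigma/closed0.
have cDN : countable (D `*` [set: nat]) by exact: countableX.
have [g <-] := countable_range_nat _ cDN DN0.
rewrite bigcup_image; exists (fun n => C (g n).1 (g n).2) => // n.
exact: (hC _).1.
Qed.

Lemma Gdelta_FsigmaC (A : set T) : Gdelta A <-> Fsigma (~` A).
Proof.
split=> [[G oG ->]|[C clC CA]].
  by rewrite setC_bigcap; exists (fun n => ~` G n) => // n; exact: open_closedC.
exists (fun n => ~` C n); first by move=> n; exact: closed_openC.
by rewrite -setC_bigcup -CA setCK.
Qed.

Lemma Gdelta_bigcap (I : Type) (D : set I) (A : I -> set T) :
  countable D -> (forall i, D i -> Gdelta (A i)) ->
  Gdelta (\bigcap_(i in D) A i).
Proof.
move=> cD GA; apply/Gdelta_FsigmaC; rewrite setC_bigcap.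
by apply: Fsigma_bigcup => // i /GA /Gdelta_FsigmaC.
Qed.

Lemma GdeltaU_open (G U : set T) : Gdelta G -> open U -> Gdelta (G `|` U).
Proof.
move=> [V oV ->] oU; rewrite setU_bigcapl; exists (fun n => V n `|` U) => //.
by move=> n; exact: openU.
Qed.

Lemma Gdelta_setCU_interior (A : set T) :
  Fsigma A -> Gdelta (~` A `|` interior A).
Proof.
move=> FA; apply: GdeltaU_open; last exact: open_interior.
by apply/Gdelta_FsigmaC; rewrite setCK.
Qed.

End countable_unions.

Section projection.
Variables T U : topologicalType.

Lemma closed_proj_compact (C : set (T * U)) (K : set U) :
  closed C -> compact K -> closed [set x | exists2 y, K y & C (x, y)].
Proof.
move=> clC cK x clx.
pose G := filter_from (nbhs x)
  (fun B => [set y | K y /\ exists2 x', B x' & C (x', y)]).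
have GF : ProperFilter G.
  apply: filter_from_proper.
    apply: filter_from_filter; first by exists setT; exact: filterT.
    move=> P Q Px Qx; exists (P `&` Q); first exact: filterI.
    by move=> y [Ky [x' [Px' Qx'] Cx']]; split; split=> //; exists x'.
  move=> B Bx; have [x' [[y Ky Cy] Bx']] := clx B Bx.
  by exists y; split=> //; exists x'.
have GK : G K by exists setT => [|y []]; first exact: filterT.
have [y [Ky cly]] := cK G GF GK.
exists y => //; apply: clC => B [[P Q] /= [Px Qy] sPQB].
have GP : G [set y | K y /\ exists2 x', P x' & C (x', y)] by exists P.
have [y' [[Ky' [x' Px' Cx']] Qy']] := cly _ _ GP Qy.
by exists (x', y'); split=> //; apply: sPQB.
Qed.

Lemma Fsigma_proj_sigma_compact (I : Type) (D : set I) (K : I -> set U)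
    (S : set (T * U)) :
  countable D -> (forall i, D i -> compact (K i)) -> Fsigma S ->
  Fsigma [set x | exists2 y, (\bigcup_(i in D) K i) y & S (x, y)].
Proof.
move=> cD cK [C clC ->].
have -> : [set x | exists2 y, (\bigcup_(i in D) K i) y & (\bigcup_n C n) (x, y)]
    = \bigcup_(p in D `*` [set: nat]) [set x | exists2 y, K p.1 y & C p.2 (x, y)].
  apply/seteqP; split=> [x [y [i Di Kiy] [n _ Cn]]|x [[i n] [Di _] [y Kiy Cn]]].
    by exists (i, n) => //; exists y.
  by exists y; [exists i | exists n].
apply: Fsigma_bigcup => [|[i n] [Di _]]; first exact: countableX.
exact/closed_Fsigma/closed_proj_compact/cK.
Qed.

End projection.

Lemma exists_natSinv_lt (R : realType) (e : R) :
  0 < e -> exists n : nat, n.+1%:R^-1 < e.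
Proof.
move=> e0; have [N _ /(_ N (leqnn N))] := near_infty_natSinv_lt (PosNum e0).
by exists N.
Qed.

Lemma closed_ball_sub_ball (R : numFieldType) (M : pseudoMetricType R)
    (c : M) (s r : R) :
  s < r -> closed_ball c s `<=` ball c r.
Proof.
move=> sr y; have rs0 : 0 < r - s by rewrite subr_gt0.
move=> /(_ _ (nbhsx_ballx y _ rs0))[z [csz /ball_sym zy]].
by rewrite -(subrKC s r); exact: ball_triangle csz zy.
Qed.

Lemma dense_ball {R : numFieldType} {M : pseudoMetricType R} {D : set M} :
  dense D -> forall (y : M) (r : R), 0 < r -> exists2 c, D c & ball y r c.
Proof.
move=> dD y r r0; have yr := nbhsx_ballx y _ r0.
have [c [/interior_subset yc Dc]] :=
  dD _ (ex_intro _ y yr) (@open_interior _ (ball y r)).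
by exists c.
Qed.

Section metric.
Context {R : realType} {Y : metricType R}.

Lemma ball_bigcup_closed_ball (c : Y) (r : R) :
  ball c r = \bigcup_n closed_ball c (r - n.+1%:R^-1).
Proof.
apply/seteqP; split=> [y|y [n _]]; last first.
  by apply: closed_ball_sub_ball; rewrite gtrBl invr_gt0.
rewrite ballEmdist /= -subr_gt0 => /exists_natSinv_lt[n nr].
exists n => //; apply: subset_closed_ball; rewrite ballEmdist /=.
by rewrite ltrBrDr addrC -ltrBrDr.
Qed.

Lemma ball_nbhs (c y : Y) (r : R) : ball c r y -> nbhs y (ball c r).
Proof.
rewrite ballEmdist /= -subr_gt0 => r0; apply/nbhs_ballP.
exists (r - mdist c y) => // z; rewrite !ballEmdist /= => yz.
apply: le_lt_trans (metric_triangle c y z) _.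
by rewrite -ltrBrDl.
Qed.

End metric.

Definition lower_inverse {X Y : Type} (F : X -> set Y) (B : set Y) : set X :=
  [set x | exists2 y, B y & F x y].

Section strong_continuity.
Context {R : realType} {X Y : metricType R} (F : X -> set Y).

Lemma Fsigma_lower_inverse_ball (K : (set Y)^nat) (c : Y) (r : R) :
  (forall n, compact (K n)) -> \bigcup_n K n = [set: Y] ->
  Fsigma (graph_mv F) -> Fsigma (lower_inverse F (ball c r)).
Proof.
move=> cK KT FF.
have -> : ball c r = \bigcup_(p in [set: nat] `*` [set: nat])
    (K p.1 `&` closed_ball c (r - p.2.+1%:R^-1)).
  rewrite (bigcup_setX (fun m n => K m `&` closed_ball c (r - n.+1%:R^-1))).
  rewrite ball_bigcup_closed_ball -[X in X = _]setTI -KT setI_bigcupl.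
  by apply: eq_bigcupr => m _; rewrite setI_bigcupr.
apply: Fsigma_proj_sigma_compact FF => // p _.
exact/compact_closedI/closed_ball_closed.
Qed.

Lemma strongly_continuous_lower_inverse (x : X) (y : Y) (B : set Y) :
  strongly_continuous_at F x -> F x y -> nbhs y B ->
  nbhs x (lower_inverse F B).
Proof.
move=> scx Fxy /nbhs_ballP[e e0 yeB].
have [d d0 dF] := scx y Fxy e e0.
apply/nbhs_ballP; exists d => // x'; rewrite ballEmdist => /dF[y' Fy' yy'].
by exists y' => //; apply: yeB; rewrite ballEmdist.
Qed.

Lemma strongly_continuous_dense_balls (D : set Y) (x : X) : dense D ->
  (forall c n, D c -> lower_inverse F (ball c n.+1%:R^-1) x ->
     nbhs x (lower_inverse F (ball c n.+1%:R^-1))) ->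
  strongly_continuous_at F x.
Proof.
move=> dD Dnbhs y Fxy e e0.
have [n ne] : exists n : nat, n.+1%:R^-1 < e / 2.
  by apply/exists_natSinv_lt/divr_gt0.
have n0 : 0 < n.+1%:R^-1 :> R by rewrite invr_gt0.
have [c Dc /ball_sym yc] := dense_ball dD y _ n0.
have /nbhs_ballP[d d0 dA] := Dnbhs c n Dc (ex_intro2 _ _ y yc Fxy).
exists d => // x' xx'.
have [y' cy' Fy'] : lower_inverse F (ball c n.+1%:R^-1) x'.
  by apply: dA; rewrite ballEmdist.
exists y' => //; suff: ball y e y' by rewrite ballEmdist.
rewrite (splitr e).
exact: ball_triangle (le_ball (ltW ne) (ball_sym yc)) (le_ball (ltW ne) cy').
Qed.

Lemma strongly_continuous_setE (D : set Y) : dense D ->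
  [set x | strongly_continuous_at F x] =
  \bigcap_(p in D `*` [set: nat])
    (~` lower_inverse F (ball p.1 p.2.+1%:R^-1)
     `|` interior (lower_inverse F (ball p.1 p.2.+1%:R^-1))).
Proof.
move=> dD; apply/seteqP; split=> [x scx [c n] _|x Px].
  have [[y cy Fxy]|] := pselect (lower_inverse F (ball c n.+1%:R^-1) x).
    right; apply: (strongly_continuous_lower_inverse _ _ _ scx Fxy).
    exact: ball_nbhs.
  by left.
apply: (strongly_continuous_dense_balls _ _ dD) => c n Dc Ax.
by have [|//] := Px (c, n) (conj Dc I).
Qed.

Lemma Gdelta_strongly_continuous (K : (set Y)^nat) :
  separable_space Y -> (forall n, compact (K n)) -> \bigcup_n K n = [set: Y] ->
  Fsigma (graph_mv F) -> Gdelta [set x | strongly_continuous_at F x].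
Proof.
move=> [D cD dD] cK KT FF; rewrite (strongly_continuous_setE _ dD).
apply: Gdelta_bigcap => [|p _]; first exact: countableX.
exact/Gdelta_setCU_interior/(Fsigma_lower_inverse_ball _ _ _ cK KT FF).
Qed.

End strong_continuity.

Theorem theorem3p2 (R : realType) (X Y : metricType R) (F : X -> set Y) :
  separable_space Y ->
  (forall x, F x !=set0) ->
  Fsigma (graph_mv F) ->
  (compact [set: Y] -> (forall x, closed (F x)) ->
     Gdelta [set x | strongly_continuous_at F x]) /\
  (exhaustible_by_compacts Y -> (forall x, closed (F x)) ->
     Sigma03 [set x | strongly_continuous_at F x]).
Proof.
have natT0 : [set: nat] !=set0 by exists 0%N.
move=> sepY _ FF; split=> [cY _|[K [cK _ KT]] _].
  by apply: (Gdelta_strongly_continuous F (fun=> [set: Y])); rewrite ?bigcup_const.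
exists (fun=> [set x | strongly_continuous_at F x]); last by rewrite bigcup_const.
by move=> _; exact: (Gdelta_strongly_continuous F K sepY cK KT FF).
Qed.
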